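(* Let $X$ be a $G$-space and suppose that for some $k>0$ there is a continuous map $\overline{s_k}\colon P(X/G)\to\mathcal{P}_k(X)$ with $\theta_k\circ\overline{s_k}=\mathrm{id}_{P(X/G)}$. Then $\mathrm{TC}^{G,k+2}(X)\le\mathrm{TC}(X/G)$, and consequently $\mathrm{TC}^{G,\infty}(X)\le\mathrm{TC}(X/G)$.
   Context: All spaces are well-pointed CW complexes, $G$ a topological group acting cellularly. $PX$ is the path space with compact-open topology, $\rho_X\colon X\to X/G$ the orbit map. $\mathcal{P}_k(X)=\{(\gamma_1,\dots,\gamma_k)\in(PX)^k\mid G\gamma_i(1)=G\gamma_{i+1}(0),\ 1\le i\le k-1\}$, and $\pi_k\colon\mathcal{P}_k(X)\to X\times X$, $\pi_k(\gamma_1,\dots,\gamma_k)=(\gamma_1(0),\gamma_k(1))$ (a fibration). The (reduced) sectional category $\mathrm{secat}(f)$ of $f\colon E\to B$ is the least $n\ge0$ such that $B$ has an open cover $U_0,\dots,U_n$ with maps $s_i\colon U_i\to E$ satisfying $f\circ s_i\simeq$ inclusion $U_i\hookrightarrow B$. $\mathrm{TC}(Y)=\mathrm{secat}(PY\to Y\times Y,\ \gamma\mapsto(\gamma(0),\gamma(1)))$ (reduced). $\mathrm{TC}^{G,k}(X)=\mathrm{secat}(\pi_k)$; this is non-increasing in $k$, and $\mathrm{TC}^{G,\infty}(X)=\min_{k\ge1}\mathrm{TC}^{G,k}(X)$. The map $\theta_k\colon\mathcal{P}_k(X)\to P(X/G)$ is $\theta_k(\gamma_1,\dots,\gamma_k)=(\rho_X\circ\gamma_1)*\cdots*(\rho_X\circ\gamma_k)$,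 the concatenation of the projected paths. *)

From HB Require Import structures.
From mathcomp Require Import all_boot all_order all_algebra generic_quotient.
From mathcomp Require Import all_classical all_reals all_analysis.



Unset Printing Implicit Defensive.

Import Order.TTheory GRing.Theory Num.Theory.
Import numFieldNormedType.Exports.
Local Open Scope classical_set_scope.
Local Open Scope ring_scope.


Definition unit_itv (R : realType) : set R := [set x | (0 : R) <= x <= 1].

Notation I01 R := (@set_type R (unit_itv R)).

Lemma toI_subproof (R : realType) (r : R) :
  Num.min 1 (Num.max 0 r) \in unit_itv R.
Proof.
rewrite in_setE /unit_itv /=; apply/andP; split.
  by rewrite le_min ler01 le_max lexx.
by rewrite ge_min lexx.
Qed.

Definition toI (R : realType) (r : R) : I01 R :=
  exist _ (Num.min 1 (Num.max 0 r)) (toI_subproof R r).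

Definition I0 (R : realType) : I01 R := toI R 0.
Definition I1 (R : realType) : I01 R := toI R 1.



Definition path_set (R : realType) (X : topologicalType) :
  set {compact-open, I01 R -> X} :=
  [set f | continuous (f : I01 R -> X)].

Notation PathSp R X := (set_type (@path_set R X)).

Definition pev (R : realType) (X : topologicalType) (p : PathSp R X)
  (t : I01 R) : X := (set_val p : I01 R -> X) t.

Definition path_ends (R : realType) (Y : topologicalType) (p : PathSp R Y) :
  Y * Y := (pev R Y p (I0 R), pev R Y p (I1 R)).

Record gspace (G X : topologicalType) := GSpace {
  gmul : G -> G -> G;
  ginv : G -> G;
  gone : G;
  gmulA : associative gmul;
  gmul1 : left_id gone gmul;
  gmulV : left_inverse gone ginv gmul;
  gmul_cont : continuous (fun p : G * G => gmul p.1 p.2);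
  ginv_cont : continuous ginv;
  act : G -> X -> X;
  act1 : forall x, act gone x = x;
  actM : forall g h x, act (gmul g h) x = act g (act h x);
  act_cont : continuous (fun p : G * X => act p.1 p.2)
}.
Arguments gmul {G X}.
Arguments ginv {G X}.
Arguments gone {G X}.
Arguments gmulA {G X}.
Arguments gmul1 {G X}.
Arguments gmulV {G X}.
Arguments gmul_cont {G X}.
Arguments ginv_cont {G X}.
Arguments act {G X}.
Arguments act1 {G X}.
Arguments actM {G X}.
Arguments act_cont {G X}.

Section orbit_space.
Context {G X : topologicalType} (A : gspace G X).

Definition orbit_rel' (x y : X) : bool := `[< exists g, act A g x = y >].

Lemma orbit_rel_refl : reflexive orbit_rel'.
Proof. by move=> x; apply/asboolP; exists (gone A); rewrite act1. Qed.

Lemma orbit_rel_sym : symmetric orbit_rel'.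
Proof.
have H x y : orbit_rel' x y -> orbit_rel' y x.
  move=> /asboolP[g <-]; apply/asboolP; exists (ginv A g).
  by rewrite -actM gmulV act1.
by move=> x y; apply/idP/idP; apply: H.
Qed.

Lemma orbit_rel_trans : transitive orbit_rel'.
Proof.
move=> y x z /asboolP[g <-] /asboolP[h <-]; apply/asboolP.
by exists (gmul A h g); rewrite actM.
Qed.

Definition orbit_rel := EquivRel _ orbit_rel_refl orbit_rel_sym orbit_rel_trans.

Local Open Scope quotient_scope.
Definition orbit_space := {eq_quot orbit_rel}.
HB.instance Definition _ := Topological.copy orbit_space
  (quotient_topology orbit_space).
HB.instance Definition _ := Quotient.on orbit_space.

Definition rho : X -> orbit_space := \pi_orbit_space.

End orbit_space.

Section Pk.
Context {R : realType} {G : topologicalType} {X : ptopologicalType}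
  (A : gspace G X).

Notation PXk k := {ptws 'I_k -> PathSp R X}.

Definition Pk_set (k : nat) : set (PXk k) :=
  [set gam | forall i j : 'I_k, nat_of_ord j = (nat_of_ord i).+1 ->
     rho A (pev R X (gam i) (I1 R)) = rho A (pev R X (gam j) (I0 R))].

Notation Pk k := (set_type (Pk_set k)).

(* pi_k(gam_1,...,gam_k) = (gam_1(0), gam_k(1)); the default value
   is only used in the degenerate case k = 0 *)
Definition pik (k : nat) (gam : Pk k) : X * X :=
  (match [pick i : 'I_k | nat_of_ord i == 0%N] with
   | Some i => pev R X (set_val gam i) (I0 R) | None => point end,
   match [pick i : 'I_k | nat_of_ord i == k.-1] with
   | Some i => pev R X (set_val gam i) (I1 R) | None => point end).

(* theta_k(gam) = (rho o gam_1) * ... * (rho o gam_k), where the i-th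
   path (i = 0..k-1) is traversed on [i/k, (i+1)/k] *)
Definition theta (k : nat) (gam : 'I_k -> PathSp R X) (t : I01 R) :
    orbit_space A :=
  let j := minn (Num.truncn (k%:R * set_val t)) k.-1 in
  match [pick i : 'I_k | nat_of_ord i == j] with
  | Some i => rho A (pev R X (gam i) (toI R (k%:R * set_val t - (nat_of_ord i)%:R)))
  | None => rho A point
  end.

End Pk.

Notation Pk R A k := (set_type (@Pk_set R _ _ A k)).

(* Reduced sectional category: secat f <= n                            *)
Definition secat_le (R : realType) {E B : topologicalType} (f : E -> B)
    (n : nat) : Prop :=
  exists U : 'I_n.+1 -> set B,
    [/\ forall i, open (U i),
        forall b, exists i, U i b &
        forall i, exists s : B -> E,
          {within U i, continuous s} /\
          exists H : B * R -> B,
            {within U i `*` unit_itv R, continuous H} /\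
            forall b, U i b -> H (b, 0) = f (s b) /\ H (b, 1) = b].

Definition TC_le (R : realType) (Y : topologicalType) (n : nat) : Prop :=
  secat_le R (path_ends R Y) n.

Definition TCG_le (R : realType) {G : topologicalType} {X : ptopologicalType}
    (A : gspace G X) (k n : nat) : Prop :=
  secat_le R (@pik R G X A k) n.

Definition TCGinf_le (R : realType) {G : topologicalType}
    {X : ptopologicalType} (A : gspace G X) (n : nat) : Prop :=
  exists k, (0 < k)%N /\ TCG_le R A k n.

From HB Require Import structures.
From mathcomp Require Import all_boot all_order all_algebra generic_quotient.
From mathcomp Require Import all_classical all_reals all_analysis.
From mathcomp Require Import ring lra zify.

(* Write Y = X/G.  For the path fibration of Y, sections up to homotopy can
   be made strict: if s is a section over U and H a homotopy from the
   endpoints of s(b) to b, then "first coordinate of H run backwards, then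
   s(b), then second coordinate of H" has endpoints exactly b.  Given such a
   strict section q, for b = (x, x') with (rho x, rho x') in U, the k paths
   sbar(q(rho x, rho x')) start in the orbit of x and end in the orbit of x',
   because theta_k o sbar is the identity; framing them by the constant paths
   at x and at x' gives an element of P_(k+2)(X) with endpoints exactly b. *)

Unset Printing Implicit Defensive.
Import Order.TTheory GRing.Theory Num.Theory.
Local Open Scope classical_set_scope.
Local Open Scope ring_scope.
Import numFieldNormedType.Exports.

Definition clamp {R : realType} (r : R) : R := Num.min 1 (Num.max 0 r).

Section unit_interval.
Context {R : realType}.

Lemma clamp_continuous : continuous (@clamp R).
Proof.
move=> x; apply: (@continuous_min R R (fun _ => 1) (fun r => Num.max 0 r)).
  exact: cvg_cst.
by apply: (@continuous_max R R (fun _ => 0) id); [exact: cvg_cst | exact: cvg_id].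
Qed.

Lemma affine_continuous (a c : R) : continuous (fun r : R => a * r + c).
Proof.
move=> x; apply: cvgD; last exact: cvg_cst.
by apply: cvgM; [exact: cvg_cst | exact: cvg_id].
Qed.

Lemma clamp_id (r : R) : 0 <= r -> r <= 1 -> clamp r = r.
Proof. by move=> r0 r1; rewrite /clamp (max_idPr r0) (min_idPr r1). Qed.

Lemma toI_continuous : continuous (toI R).
Proof. by apply: continuous_comp_initial; exact: clamp_continuous. Qed.

Lemma val_I0 : set_val (I0 R) = 0.
Proof. exact: clamp_id (lexx _) ler01. Qed.

Lemma val_I1 : set_val (I1 R) = 1.
Proof. exact: clamp_id ler01 (lexx _). Qed.

Lemma I01_compact : compact [set: I01 R].
Proof.
have -> : [set: I01 R] = toI R @` `[0, 1]%classic.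
  apply/seteqP; split => // t _; have /andP[t0 t1] := set_valP t.
  exists (set_val t); first by rewrite /= in_itv /= t0 t1.
  by apply: val_inj; rewrite /= (max_idPr t0) (min_idPr t1).
apply: continuous_compact; last exact: segment_compact.
exact/continuous_subspaceT/toI_continuous.
Qed.

Lemma I01_locally_compact : locally_compact [set: I01 R].
Proof.
move=> x _; exists setT; first exact: filterT.
by split; [exact: I01_compact | exact: closedT].
Qed.

Lemma I01_hausdorff : hausdorff_space (I01 R).
Proof.
have val_cont : continuous (set_val : I01 R -> R) by exact: initial_continuous.
rewrite open_hausdorff => x y xy.
have vxy : set_val x != set_val y.
  by apply: contra xy => /eqP h; apply/eqP; apply: val_inj.
have := @Rhausdorff R; rewrite open_hausdorff => /(_ _ _ vxy).
move=> [[P Q] /= [Px Qy] [oP oQ PQ]].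
exists (set_val @^-1` P, set_val @^-1` Q) => /=.
  by rewrite !inE; split; rewrite -inE.
split; [by move/continuousP : val_cont; apply..|].
apply/eqP/seteqP; split => // z [/= Pz Qz].
by have : (P `&` Q) (set_val z) by []; rewrite (eqP PQ).
Qed.

End unit_interval.

Lemma continuous_if_closed {T U : topologicalType} (p : T -> bool) (B : set T)
    (g h : T -> U) :
  closed [set x | p x] -> closed B -> (forall x, ~~ p x -> B x) ->
  (forall x, p x -> B x -> g x = h x) ->
  continuous g -> continuous h ->
  continuous (fun x => if p x then g x else h x).
Proof.
move=> cp cB pB gh cg ch; apply/continuous_subspace_setT.
have -> : [set: T] = [set x | p x] `|` B.
  apply/seteqP; split => // x _.
  by case: (boolP (p x)) => px; [left | right; exact: pB].
apply: withinU_continuous => //.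
  apply: (@subspace_eq_continuous _ _ _ (from_subspace _ g)).
    by move=> x; rewrite inE /= /from_subspace => ->.
  exact: continuous_subspaceT.
apply: (@subspace_eq_continuous _ _ _ (from_subspace _ h)).
  move=> x; rewrite inE /= => Bx; rewrite /from_subspace.
  by case: (boolP (p x)) => // px; rewrite gh.
exact: continuous_subspaceT.
Qed.

Lemma continuous_pair {T U V : topologicalType} (f : T -> U) (g : T -> V) :
  continuous f -> continuous g -> continuous (fun t => (f t, g t)).
Proof.
by move=> cf cg t; apply: (@cvg_pair _ _ _ _ _ _ _ _ _ f g); [exact: cf | exact: cg].
Qed.

Lemma ptws_continuous {Z T : topologicalType} {I : Type} (f : Z -> {ptws I -> T}) :
  (forall i, continuous (fun z => f z i)) -> continuous f.
Proof.
move=> cf z; apply/cvg_sup => i.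
move=> U [? /= [[W oW <-]]] /= Wfz /filterS; apply; apply: (cf i).
exact: open_nbhs_nbhs.
Qed.

Section paths.
Context {R : realType} {T : topologicalType}.

Definition const_path (x : T) : PathSp R T :=
  exist (fun f => f \in path_set R T) (fun _ => x)
    (mem_set (@cst_continuous (I01 R) T x)).

Lemma const_path_continuous : continuous const_path.
Proof.
apply: continuous_comp_initial.
have -> : set_val \o const_path = curry (fun p : T * I01 R => p.1) by [].
by apply: continuous_curry_fun => p; exact: cvg_fst.
Qed.

(* The constant path is a junk value for discontinuous [f]. *)
Definition pathify (f : I01 R -> T) : PathSp R T :=
  match pselect (continuous f) with
  | left cf => exist (fun f => f \in path_set R T) f (mem_set cf)
  | right _ => const_path (f (I0 R))
  end.

Lemma pathifyE (f : I01 R -> T) : continuous f -> set_val (pathify f) = f.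
Proof. by move=> cf; rewrite /pathify; case: (pselect (continuous f)). Qed.

End paths.

Definition strict_secat_le {E B : topologicalType} (f : E -> B) (n : nat) : Prop :=
  exists U : 'I_n.+1 -> set B,
    [/\ forall i, open (U i),
        forall b, exists i, U i b &
        forall i, exists s : B -> E,
          {within U i, continuous s} /\ forall b, U i b -> f (s b) = b].

Lemma secat_le_of_strict (R : realType) {E B : topologicalType} (f : E -> B) n :
  strict_secat_le f n -> secat_le R f n.
Proof.
case=> U [oU covU secU]; exists U; split => // i.
have [s [cs fs]] := secU i; exists s; split => //.
exists fst; split; first by apply: continuous_subspaceT => p; exact: cvg_fst.
by move=> b Ub; rewrite fs.
Qed.

Section detour.
Context {R : realType} {Y : topologicalType} {U : set (Y * Y)}.
Context (s : Y * Y -> PathSp R Y) (cs : {within U, continuous s}).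
Context (H : (Y * Y) * R -> Y * Y) (cH : {within U `*` unit_itv R, continuous H}).
Context (hH : forall b, U b -> H (b, 0) = path_ends R Y (s b) /\ H (b, 1) = b).

Local Notation T := (set_type U).

Let snd_val_continuous : continuous (fun q : T * I01 R => set_val q.2).
Proof.
by move=> q; apply: continuous_comp; [exact: cvg_snd | exact: initial_continuous].
Qed.

Lemma homotopy_piece_continuous (e : R -> R) : continuous e ->
  continuous (fun p : T * I01 R => H (set_val p.1, clamp (e (set_val p.2)))).
Proof.
move=> ce; have cHs := (subspace_sigL_continuousP _ _).1 cH.
have mP (p : T * I01 R) :
    (set_val p.1, clamp (e (set_val p.2))) \in U `*` unit_itv R.
  apply: mem_set; split; first exact: set_valP.
  by have := toI_subproof R (e (set_val p.2)); rewrite in_setE.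
pose m p : set_type (U `*` unit_itv R) :=
  exist (fun x => x \in U `*` unit_itv R) _ (mP p).
have cm : continuous m.
  apply: continuous_comp_initial.
  apply: (@continuous_pair _ _ _ (fun p => set_val p.1)
    (fun p => clamp (e (set_val p.2)))).
    by move=> p; apply: continuous_comp; [exact: cvg_fst | exact: initial_continuous].
  move=> p; exact: continuous_comp (continuous_comp (snd_val_continuous p) (ce _))
    (@clamp_continuous R _).
by move=> p; apply: continuous_comp (cm p) (cHs (m p)).
Qed.

Lemma section_piece_continuous (e : R -> R) : continuous e ->
  continuous (fun p : T * I01 R => pev R Y (s (set_val p.1)) (toI R (e (set_val p.2)))).
Proof.
move=> ce; have css := (subspace_sigL_continuousP _ _).1 cs.
pose S (u : T) : {compact-open, I01 R -> Y} := set_val (s (set_val u)).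
have cS0 : continuous S.
  by move=> u; apply: (continuous_comp (css u)); exact: initial_continuous.
have cS : continuous (uncurry (S : T -> I01 R -> Y)).
  apply: continuous_uncurry.
  - exact: I01_locally_compact.
  - exact: I01_hausdorff.
  - exact: cS0.
  - by move=> u; have := set_valP (s (set_val u)); exact.
have cm : continuous (fun q : T * I01 R => (q.1, toI R (e (set_val q.2)))).
  apply: (@continuous_pair _ _ _ fst (fun q => toI R (e (set_val q.2)))) => q.
    exact: cvg_fst.
  exact: continuous_comp (continuous_comp (snd_val_continuous q) (ce _))
    (@toI_continuous R _).
by move=> q; apply: continuous_comp (cm q) (cS _).
Qed.

(* On [0,1/3] the first coordinate of H is run backwards from [b.1] to the
   start of [s b], on [1/3,2/3] the path [s b] is run, and on [2/3,1] the
   second coordinate of H is run from the end of [s b] to [b.2]. *)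
Definition detour_fun (b : Y * Y) (t : I01 R) : Y :=
  let r := set_val t in
  if r <= 3^-1 then (H (b, clamp (-3 * r + 1))).1
  else if r <= 2/3 then pev R Y (s b) (toI R (3 * r - 1))
  else (H (b, clamp (3 * r - 2))).2.

Lemma detour_fun_continuous :
  continuous (fun p : T * I01 R => detour_fun (set_val p.1) p.2).
Proof.
have cle c : closed [set q : T * I01 R | set_val q.2 <= c].
  by have := (continuous_closedP _).1 snd_val_continuous _ (@closed_le _ c).
have cge c : closed [set q : T * I01 R | c <= set_val q.2].
  by have := (continuous_closedP _).1 snd_val_continuous _ (@closed_ge _ c).
have ends_s (q : T * I01 R) : H (set_val q.1, 0) = path_ends R Y (s (set_val q.1)).
  by case: (hH _ (set_valP q.1)).
have pH a c := homotopy_piece_continuous _ (affine_continuous a c).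
rewrite /detour_fun /=.
apply: continuous_if_closed (cle _) (cge 3^-1) _ _ _ _.
- by move=> q /=; rewrite -ltNge => /ltW.
- move=> q /= q1 q2; have -> : set_val q.2 = 3^-1 by apply/le_anti; rewrite q1 q2.
  have -> : (3^-1 <= 2/3 :> R) by lra.
  have -> : -3 * 3^-1 + 1 = 0 :> R by field.
  have -> : 3 * 3^-1 - 1 = 0 :> R by field.
  by rewrite clamp_id ?lexx ?ler01 // ends_s.
- by move=> q; apply: (continuous_comp (pH (-3) 1 q)); exact: cvg_fst.
apply: continuous_if_closed (cle _) (cge (2/3)) _ _ _ _.
- by move=> q /=; rewrite -ltNge => /ltW.
- move=> q /= q1 q2; have -> : set_val q.2 = 2/3 by apply/le_anti; rewrite q1 q2.
  have -> : 3 * (2/3) - 2 = 0 :> R by field.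
  have -> : 3 * (2/3) - 1 = 1 :> R by field.
  by rewrite clamp_id ?lexx ?ler01 // ends_s.
- exact: section_piece_continuous _ (affine_continuous 3 (-1)).
by move=> q; apply: (continuous_comp (pH 3 (-2) q)); exact: cvg_snd.
Qed.

Definition detour (b : Y * Y) : PathSp R Y := pathify (detour_fun b).

Lemma detourE (b : Y * Y) : U b -> set_val (detour b) = detour_fun b.
Proof.
move=> Ub; rewrite /detour pathifyE //.
pose u : T := exist (fun x => x \in U) b (mem_set Ub).
have -> : detour_fun b =
    (fun p : T * I01 R => detour_fun (set_val p.1) p.2) \o (fun t => (u, t)) by [].
move=> t; apply: continuous_comp; last exact: detour_fun_continuous.
by apply: continuous_pair; [exact: cst_continuous | move=> t'; exact: cvg_id].
Qed.

Lemma detour_continuous : {within U, continuous detour}.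
Proof.
apply/subspace_sigL_continuousP/continuous_comp_initial.
have -> : set_val \o sigL U detour =
    curry (fun p : T * I01 R => detour_fun (set_val p.1) p.2).
  by apply/funext => u /=; rewrite /sigL /= detourE //; exact: set_valP.
exact: continuous_curry_fun detour_fun_continuous.
Qed.

Lemma detour_ends (b : Y * Y) : U b -> path_ends R Y (detour b) = b.
Proof.
move=> Ub; rewrite /path_ends /pev detourE // /detour_fun /= val_I0 val_I1.
rewrite mulr0 add0r invr_ge0 ler0n mulr1.
have -> : (1 <= 3^-1 :> R) = false by apply/negbTE; rewrite -ltNge; lra.
have -> : (1 <= 2/3 :> R) = false by apply/negbTE; rewrite -ltNge; lra.
have -> : 3 - 2 = 1 :> R by lra.
by rewrite !clamp_id ?ler01 ?lexx // (hH _ Ub).2 -surjective_pairing.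
Qed.

End detour.

Lemma TC_le_strict_secat (R : realType) (Y : topologicalType) n :
  TC_le R Y n -> strict_secat_le (path_ends R Y) n.
Proof.
case=> U [oU covU secU]; exists U; split => // i.
have [s [cs [H [cH hH]]]] := secU i.
exists (detour s H); split; first exact: detour_continuous.
exact: detour_ends.
Qed.

Section lift.
Context {R : realType} {G : topologicalType} {X : ptopologicalType} {A : gspace G X}.
Context {k : nat} (hk : (0 < k)%N).
Context {sbar : PathSp R (orbit_space A) -> Pk R A k} (sbar_cont : continuous sbar)
  (sbar_sec : forall p : PathSp R (orbit_space A),
     theta A k (set_val (sbar p)) = (set_val p : I01 R -> orbit_space A)).

Local Notation Y := (orbit_space A).

Let first_idx : 'I_k := Ordinal hk.
Let last_idx : 'I_k := Ordinal (etrans (ltn_predL k) hk).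

Lemma theta_I0 (gam : 'I_k -> PathSp R X) :
  theta A k gam (I0 R) = rho A (pev R X (gam first_idx) (I0 R)).
Proof.
rewrite /theta val_I0 mulr0 truncn0 min0n.
case: pickP => [i /eqP i0 | none]; last by have := none first_idx.
have -> : i = first_idx by apply: val_inj.
by rewrite /= subr0.
Qed.

Lemma theta_I1 (gam : 'I_k -> PathSp R X) :
  theta A k gam (I1 R) = rho A (pev R X (gam last_idx) (I1 R)).
Proof.
rewrite /theta val_I1 mulr1 natrK (minn_idPr (leq_pred k)).
case: pickP => [i /eqP i0 | none]; last by have := none last_idx; rewrite eqxx.
have -> : i = last_idx by apply: val_inj.
congr (rho A (pev R X _ _)); apply: val_inj => /=.
by rewrite -{1}(prednK hk) -addn1 natrD addrAC subrr add0r.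
Qed.

Definition rho2 (b : X * X) : Y * Y := (rho A b.1, rho A b.2).

Lemma rho2_continuous : continuous rho2.
Proof.
by apply: continuous_pair => b; apply: continuous_comp;
  [exact: cvg_fst | exact: pi_continuous | exact: cvg_snd | exact: pi_continuous].
Qed.

Definition padded_lift (Q : X * X -> PathSp R Y) (b : X * X) :
    {ptws 'I_k.+2 -> PathSp R X} :=
  fun j => if (j : nat) == 0%N then const_path b.1
           else if insub (j : nat).-1 is Some i then set_val (sbar (Q b)) i
           else const_path b.2.

Lemma padded_lift_Pk (Q : X * X -> PathSp R Y) (b : X * X) :
  path_ends R Y (Q b) = rho2 b -> Pk_set A k.+2 (padded_lift Q b).
Proof.
move=> [Q0 Q1]; set gam := set_val (sbar (Q b)).
have gamP : Pk_set A k gam := set_valP (sbar (Q b)).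
have gam0 : rho A (pev R X (gam first_idx) (I0 R)) = rho A b.1.
  by rewrite -theta_I0 /gam sbar_sec.
have gam1 : rho A (pev R X (gam last_idx) (I1 R)) = rho A b.2.
  by rewrite -theta_I1 /gam sbar_sec.
move=> [[|i] ilt] j /= ji; rewrite /padded_lift ji /=.
  case: insubP => [u _ u0 | ]; last by rewrite hk.
  by have -> : u = first_idx by apply: val_inj.
have ik : (i < k)%N by have := ltn_ord j; rewrite ji.
case: insubP => [u _ ui | ]; last by rewrite ik.
case: insubP => [w _ wi | wk]; first by apply: gamP; rewrite wi ui.
have -> : u = last_idx by apply: val_inj => /=; move: wk ik; rewrite ui -leqNgt; lia.
by rewrite gam1.
Qed.

Lemma padded_lift_continuous (Q : X * X -> PathSp R Y) (V : set (X * X)) :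
  open V -> {within V, continuous Q} -> {within V, continuous padded_lift Q}.
Proof.
move=> oV cQ; apply: ptws_continuous => j.
have : {within V, continuous (fun b => padded_lift Q b j)}; last exact.
rewrite continuous_open_subspace // => b Vb; rewrite /padded_lift.
case: (nat_of_ord j == 0%N).
  by apply: (@continuous_comp _ _ _ fst const_path);
    [exact: cvg_fst | exact: const_path_continuous].
case: (insub (nat_of_ord j).-1) => [u|]; last first.
  by apply: (@continuous_comp _ _ _ snd const_path);
    [exact: cvg_snd | exact: const_path_continuous].
rewrite continuous_open_subspace // in cQ.
apply: (@continuous_comp _ _ _ Q (fun p => set_val (sbar p) u) b (cQ b Vb)).
apply: (@continuous_comp _ _ _ sbar (fun g => set_val g u)); first exact: sbar_cont.
apply: (@continuous_comp (Pk R A k) {ptws 'I_k -> PathSp R X} _ set_val (fun f => f u)).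
  exact: initial_continuous.
exact: proj_continuous.
Qed.

Let const_Pk : Pk_set A k.+2 (fun _ => @const_path R X point).
Proof. by []. Qed.

(* A tuple of constant paths is the junk value where [padded_lift Q b] is
   not in P_(k+2)(X). *)
Definition Pk_lift (Q : X * X -> PathSp R Y) (b : X * X) : Pk R A k.+2 :=
  match pselect (Pk_set A k.+2 (padded_lift Q b)) with
  | left h => exist (fun x => x \in Pk_set A k.+2) _ (mem_set h)
  | right _ => exist (fun x => x \in Pk_set A k.+2) _ (mem_set const_Pk)
  end.

Lemma Pk_liftE (Q : X * X -> PathSp R Y) (b : X * X) :
  path_ends R Y (Q b) = rho2 b -> set_val (Pk_lift Q b) = padded_lift Q b.
Proof.
move=> Qb; rewrite /Pk_lift; case: pselect => // nP.
by exfalso; apply/nP/padded_lift_Pk.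
Qed.

Lemma pik_Pk_lift (Q : X * X -> PathSp R Y) (b : X * X) :
  path_ends R Y (Q b) = rho2 b -> pik A k.+2 (Pk_lift Q b) = b.
Proof.
move=> Qb; rewrite /pik Pk_liftE // /padded_lift.
case: pickP => [i /eqP -> | none]; last by have := none ord0.
case: pickP => [j /eqP -> /= | none]; last by have := none ord_max; rewrite /= eqxx.
case: insubP => [u ku _ | _]; first by rewrite ltnn in ku.
by case: b Qb.
Qed.

Lemma strict_secat_pik n :
  strict_secat_le (path_ends R Y) n -> strict_secat_le (@pik R _ _ A k.+2) n.
Proof.
case=> U [oU covU secU].
have oV i : open (rho2 @^-1` U i).
  by move/continuousP: rho2_continuous; apply.
exists (fun i => rho2 @^-1` U i); split => //.
  by move=> b; have [i Ui] := covU (rho2 b); exists i.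
move=> i; have [q [cq qE]] := secU i.
have cQ : {within rho2 @^-1` U i, continuous (q \o rho2)}.
  rewrite continuous_open_subspace // => b Vb.
  rewrite continuous_open_subspace // in cq.
  exact: continuous_comp (rho2_continuous b) (cq _ Vb).
exists (Pk_lift (q \o rho2)); split; last by move=> b Vb; rewrite pik_Pk_lift // qE.
apply: continuous_comp_initial.
apply: (@subspace_eq_continuous _ _ _ (padded_lift (q \o rho2))).
  by move=> b /set_mem Vb; rewrite /= Pk_liftE // qE.
exact: padded_lift_continuous (oV i) cQ.
Qed.

End lift.

Theorem mainTheorem3 (R : realType) (G : topologicalType)
  (X : ptopologicalType) (A : gspace G X) (k : nat) (hk : (0 < k)%N)
  (sbar : PathSp R (orbit_space A) -> Pk R A k)
  (sbar_cont : continuous sbar)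
  (sbar_sec : forall p : PathSp R (orbit_space A),
     theta A k (set_val (sbar p)) = (set_val p : I01 R -> orbit_space A)) :
  (forall n : nat, TC_le R (orbit_space A) n -> TCG_le R A k.+2 n) /\
  (forall n : nat, TC_le R (orbit_space A) n -> TCGinf_le R A n).
Proof.
have TCG_k2 n : TC_le R (orbit_space A) n -> TCG_le R A k.+2 n.
  move=> /TC_le_strict_secat /(strict_secat_pik hk sbar_cont sbar_sec).
  exact: secat_le_of_strict.
by split => // n /TCG_k2 TCGn; exists k.+2.
Qed.
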